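(* Let $n\ge1$, $\boldsymbol\alpha=(\alpha_1,\dots,\alpha_n)\in((0,\pi)\setminus\mathcal E)^n$, $\boldsymbol\ell=(\ell_1,\dots,\ell_n)\in(0,\infty)^n$, $\sigma\in\mathbb R$. Then the matrix $\mathtt T(\boldsymbol\alpha,\boldsymbol\ell,\sigma)$ has the form $\begin{pmatrix}p_n&q_n\\ \bar q_n&\bar p_n\end{pmatrix}$ with $|p_n|^2-|q_n|^2=1$, where $$p_n=\frac{1}{\prod_{j=1}^n\sin\frac{\pi^2}{2\alpha_j}}\sum_{\substack{\boldsymbol\zeta\in\{\pm1\}^n\\ \zeta_1=1}}\mathfrak p_{\boldsymbol\zeta}\,e^{i\,\boldsymbol\ell\cdot\boldsymbol\zeta\,\sigma},\qquad q_n=\frac{-i}{\prod_{j=1}^n\sin\frac{\pi^2}{2\alpha_j}}\sum_{\substack{\boldsymbol\zeta\in\{\pm1\}^n\\ \zeta_1=1}}\mathfrak q_{\boldsymbol\zeta}\,e^{-i\,\boldsymbol\ell\cdot\boldsymbol\zeta\,\sigma}.$$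
   Context: $\mathcal E=\{\pi/(2k):k\in\mathbb N\}$. For $\alpha\notin\mathcal E$, $\mathtt A(\alpha)=\begin{pmatrix}\csc\frac{\pi^2}{2\alpha}&-i\cot\frac{\pi^2}{2\alpha}\\ i\cot\frac{\pi^2}{2\alpha}&\csc\frac{\pi^2}{2\alpha}\end{pmatrix}$, $\mathtt B(\ell,\sigma)=\operatorname{diag}(e^{i\ell\sigma},e^{-i\ell\sigma})$, and $\mathtt T(\boldsymbol\alpha,\boldsymbol\ell,\sigma)=\mathtt A(\alpha_n)\mathtt B(\ell_n,\sigma)\cdots\mathtt A(\alpha_1)\mathtt B(\ell_1,\sigma)$. For $\boldsymbol\zeta\in\{\pm1\}^n$: $\mathrm{ch}(\boldsymbol\zeta)=\{j\in\{1,\dots,n\}:\zeta_j\ne\zeta_{j+1}\}$ with cyclic convention $\zeta_{n+1}=\zeta_1$; $\widetilde{\mathrm{ch}}(\boldsymbol\zeta)=\{j\in\{1,\dots,n\}:\zeta_j\ne\zeta_{j+1}\}$ with the convention $\zeta_{n+1}=-1$ instead; $\mathfrak p_{\boldsymbol\zeta}=\prod_{j\in\mathrm{ch}(\boldsymbol\zeta)}\cos\frac{\pi^2}{2\alpha_j}$, $\mathfrak q_{\boldsymbol\zeta}=\prod_{j\in\widetilde{\mathrm{ch}}(\boldsymbol\zeta)}\cos\frac{\pi^2}{2\alpha_j}$ (empty products equal $1$); $\boldsymbol\ell\cdot\boldsymbol\zeta=\sum_j\ell_j\zeta_j$. *)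

From Stdlib Require Import Reals List.
Import ListNotations.
Open Scope R_scope.

Record C := mkC { re : R ; im : R }.
Definition RtoC (x : R) : C := mkC x 0.
Definition C0 : C := RtoC 0.
Definition C1 : C := RtoC 1.
Definition Ci : C := mkC 0 1.
Definition Cadd (z w : C) : C := mkC (re z + re w) (im z + im w).
Definition Cmul (z w : C) : C :=
  mkC (re z * re w - im z * im w) (re z * im w + im z * re w).
Definition Cscale (r : R) (z : C) : C := mkC (r * re z) (r * im z).
Definition Cconj (z : C) : C := mkC (re z) (- im z).
Definition Cnorm2 (z : C) : R := re z * re z + im z * im z.
Definition Cexpi (t : R) : C := mkC (cos t) (sin t).

Definition Csum (l : list C) : C := fold_right Cadd C0 l.

Record M2 := mkM2 { m11 : C ; m12 : C ; m21 : C ; m22 : C }.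
Definition Mmul (X Y : M2) : M2 :=
  mkM2 (Cadd (Cmul (m11 X) (m11 Y)) (Cmul (m12 X) (m21 Y)))
       (Cadd (Cmul (m11 X) (m12 Y)) (Cmul (m12 X) (m22 Y)))
       (Cadd (Cmul (m21 X) (m11 Y)) (Cmul (m22 X) (m21 Y)))
       (Cadd (Cmul (m21 X) (m12 Y)) (Cmul (m22 X) (m22 Y))).
Definition Mid : M2 := mkM2 C1 C0 C0 C1.

Definition in_E (a : R) : Prop := exists k : nat, (1 <= k)%nat /\ a = PI / (2 * INR k).

Definition theta (a : R) : R := PI ^ 2 / (2 * a).

Definition Amat (a : R) : M2 :=
  let th := theta a in
  mkM2 (RtoC (1 / sin th)) (mkC 0 (- (cos th / sin th)))
       (mkC 0 (cos th / sin th)) (RtoC (1 / sin th)).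

Definition Bmat (l s : R) : M2 := mkM2 (Cexpi (l * s)) C0 C0 (Cexpi (- (l * s))).

(** T(alpha, ell, sigma) = A(alpha_n)B(ell_n) ... A(alpha_1)B(ell_1);
    sequences are indexed from 1 (alpha 1, ..., alpha n). *)
Fixpoint Tmat (alpha ell : nat -> R) (s : R) (n : nat) : M2 :=
  match n with
  | O => Mid
  | S k => Mmul (Mmul (Amat (alpha (S k))) (Bmat (ell (S k)) s)) (Tmat alpha ell s k)
  end.

(** All sign vectors in {+-1}^n, encoded as boolean lists of length n
    (true = +1, false = -1); entry zeta_j (1 <= j <= n) is the (j-1)-th item. *)
Fixpoint sign_vectors (n : nat) : list (list bool) :=
  match n with
  | O => [[]]
  | S k => map (cons true) (sign_vectors k) ++ map (cons false) (sign_vectors k)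
  end.

Definition zval (z : list bool) (j : nat) : R :=
  if nth (j - 1) z true then 1 else -1.

Definition sign_vectors1 (n : nat) : list (list bool) :=
  filter (fun z => nth 0 z false) (sign_vectors n).

Definition znext_cyc (n : nat) (z : list bool) (j : nat) : R :=
  if Nat.eqb j n then zval z 1 else zval z (S j).
Definition znext_neg (n : nat) (z : list bool) (j : nat) : R :=
  if Nat.eqb j n then -1 else zval z (S j).

Fixpoint Rprod1 (n : nat) (f : nat -> R) : R :=
  match n with O => 1 | S k => Rprod1 k f * f (S k) end.
Fixpoint Rsum1 (n : nat) (f : nat -> R) : R :=
  match n with O => 0 | S k => Rsum1 k f + f (S k) end.

(** p_zeta = prod_{j in ch(zeta)} cos(pi^2/(2 alpha_j)) *)
Definition pfrak (n : nat) (alpha : nat -> R) (z : list bool) : R :=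
  Rprod1 n (fun j => if Req_EM_T (zval z j) (znext_cyc n z j) then 1
                     else cos (theta (alpha j))).
(** q_zeta = prod_{j in ch~(zeta)} cos(pi^2/(2 alpha_j)) *)
Definition qfrak (n : nat) (alpha : nat -> R) (z : list bool) : R :=
  Rprod1 n (fun j => if Req_EM_T (zval z j) (znext_neg n z j) then 1
                     else cos (theta (alpha j))).

Definition ldot (n : nat) (ell : nat -> R) (z : list bool) : R :=
  Rsum1 n (fun j => ell j * zval z j).

Definition sin_prod (n : nat) (alpha : nat -> R) : R :=
  Rprod1 n (fun j => sin (theta (alpha j))).

Definition p_n (n : nat) (alpha ell : nat -> R) (s : R) : C :=
  Cscale (1 / sin_prod n alpha)
    (Csum (map (fun z => Cscale (pfrak n alpha z) (Cexpi (ldot n ell z * s)))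
               (sign_vectors1 n))).

Definition q_n (n : nat) (alpha ell : nat -> R) (s : R) : C :=
  Cmul (mkC 0 (-1))
   (Cscale (1 / sin_prod n alpha)
    (Csum (map (fun z => Cscale (qfrak n alpha z) (Cexpi (- (ldot n ell z * s))))
               (sign_vectors1 n)))).

(* Write [Mform p q] for the matrix [[p, q], [conj q, conj p]] and
   theta_j = pi^2 / (2 alpha_j).  The proof is an induction on n >= 1.
   Splitting a sign vector of length n+1 as (zeta, zeta_{n+1}), the weights
   p_zeta, q_zeta and the phase ell.zeta factor through the last coordinate
   ([chfrak_snoc], [ldot_snoc]): a sign change at position n+1 contributes
   cos theta_{n+1}.  Hence the sums P_n = sum p_zeta e^{i ell.zeta sigma} and
   Q_n = sum q_zeta e^{-i ell.zeta sigma} over zeta_1 = +1 satisfy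
       P_{n+1} = e^{i l s} P_n + cos theta * e^{-i l s} conj Q_n,
       Q_{n+1} = e^{i l s} Q_n + cos theta * e^{-i l s} conj P_n
   ([Psum_snoc], [Qsum_snoc]), which is exactly the effect of multiplying
   Mform(p_n, q_n) on the left by A(alpha_{n+1}) B(ell_{n+1}, sigma)
   ([Tmat_form]).  Finally |p|^2 - |q|^2 is the determinant of Mform(p, q),
   and det T = 1 since det A = csc^2 - cot^2 = 1 and det B = 1 ([Tmat_det]).
   All this needs sin theta_j <> 0, which is the hypothesis alpha_j not in E
   ([sin_theta_neq0]). *)

From Stdlib Require Import Reals List Permutation Lra Lia ZArith.
Import ListNotations.
Open Scope R_scope.

Lemma C_ext (z w : C) : re z = re w -> im z = im w -> z = w.
Proof. destruct z, w; simpl; intros; subst; reflexivity. Qed.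

Ltac C_ring := apply C_ext; unfold C0, C1, RtoC; simpl; ring.

Lemma Cadd_comm (a b : C) : Cadd a b = Cadd b a.
Proof. C_ring. Qed.

Lemma Cadd_assoc (a b c : C) : Cadd a (Cadd b c) = Cadd (Cadd a b) c.
Proof. C_ring. Qed.

Lemma Cexpi_add (a b : R) : Cexpi (a + b) = Cmul (Cexpi b) (Cexpi a).
Proof. apply C_ext; simpl; [rewrite cos_plus | rewrite sin_plus]; ring. Qed.

Lemma Csum_app (l1 l2 : list C) : Csum (l1 ++ l2) = Cadd (Csum l1) (Csum l2).
Proof.
  induction l1 as [|a l1 IH]; simpl.
  - C_ring.
  - rewrite IH. apply Cadd_assoc.
Qed.

Lemma Csum_Permutation (l1 l2 : list C) : Permutation l1 l2 -> Csum l1 = Csum l2.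
Proof.
  induction 1; simpl; try congruence.
  rewrite !Cadd_assoc, (Cadd_comm y x). reflexivity.
Qed.

Lemma Csum_map_additive {A : Type} (h : C -> C) (f : A -> C) (l : list A) :
  h C0 = C0 -> (forall u v, h (Cadd u v) = Cadd (h u) (h v)) ->
  Csum (map (fun x => h (f x)) l) = h (Csum (map f l)).
Proof.
  intros h0 hadd. induction l as [|a l IH]; simpl; auto.
  rewrite hadd, IH. reflexivity.
Qed.

(** * Sign vectors, split along their last coordinate *)

Definition snoc (b : bool) (z : list bool) : list bool := z ++ [b].

Definition bsign (b : bool) : R := if b then 1 else -1.

Lemma sign_vectors_length (n : nat) (z : list bool) :
  In z (sign_vectors n) -> length z = n.
Proof.
  revert z; induction n as [|n IH]; simpl; intros z Hz.
  - destruct Hz as [<- | []]; reflexivity.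
  - apply in_app_or in Hz as [Hz | Hz]; apply in_map_iff in Hz as [x [<- Hx]];
      simpl; f_equal; auto.
Qed.

Lemma sign_vectors_snoc (n : nat) : Permutation (sign_vectors (S n))
  (map (snoc true) (sign_vectors n) ++ map (snoc false) (sign_vectors n)).
Proof.
  induction n as [|n IH].
  - apply Permutation_refl.
  - change (sign_vectors (S (S n))) with
      (map (cons true) (sign_vectors (S n)) ++ map (cons false) (sign_vectors (S n))).
    eapply perm_trans.
    { apply Permutation_app; apply Permutation_map; exact IH. }
    change (sign_vectors (S n)) with
      (map (cons true) (sign_vectors n) ++ map (cons false) (sign_vectors n)).
    rewrite !map_app, !map_map. unfold snoc. simpl.
    rewrite <- !app_assoc. apply Permutation_app_head.
    rewrite !app_assoc. apply Permutation_app_tail.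
    apply Permutation_app_comm.
Qed.

Lemma sign_vectors1_S (n : nat) :
  sign_vectors1 (S n) = map (cons true) (sign_vectors n).
Proof.
  unfold sign_vectors1. simpl.
  rewrite filter_app, !filter_map_swap. simpl.
  rewrite filter_true, filter_false, app_nil_r. reflexivity.
Qed.

Lemma sign_vectors1_snoc (n : nat) : Permutation (sign_vectors1 (S (S n)))
  (map (snoc true) (sign_vectors1 (S n)) ++ map (snoc false) (sign_vectors1 (S n))).
Proof.
  rewrite !sign_vectors1_S.
  eapply perm_trans; [apply Permutation_map, sign_vectors_snoc |].
  rewrite !map_app, !map_map. apply Permutation_refl.
Qed.

Lemma sign_vectors1_In (n : nat) (z : list bool) :
  In z (sign_vectors1 (S n)) -> length z = S n /\ zval z 1 = 1.
Proof.
  rewrite sign_vectors1_S. intros Hz.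
  apply in_map_iff in Hz as [x [<- Hx]].
  split; [simpl; f_equal; apply sign_vectors_length; exact Hx | reflexivity].
Qed.

Lemma Csum_sign_vectors1_snoc (n : nat) (f : list bool -> C) :
  Csum (map f (sign_vectors1 (S (S n)))) =
  Cadd (Csum (map (fun z => f (snoc true z)) (sign_vectors1 (S n))))
       (Csum (map (fun z => f (snoc false z)) (sign_vectors1 (S n)))).
Proof.
  rewrite (Csum_Permutation _ _ (Permutation_map f (sign_vectors1_snoc n))).
  rewrite map_app, Csum_app, !map_map. reflexivity.
Qed.

Lemma zval_snoc_lt (n : nat) (z : list bool) (b : bool) (j : nat) :
  length z = n -> (1 <= j <= n)%nat -> zval (snoc b z) j = zval z j.
Proof. intros Hl Hj. unfold zval, snoc. rewrite app_nth1 by lia. reflexivity. Qed.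

Lemma zval_snoc_last (n : nat) (z : list bool) (b : bool) :
  length z = n -> zval (snoc b z) (S n) = bsign b.
Proof.
  intros Hl. unfold zval, snoc. rewrite app_nth2 by lia.
  replace (S n - 1 - length z)%nat with 0%nat by lia. reflexivity.
Qed.

Lemma Rprod1_ext (n : nat) (f g : nat -> R) :
  (forall j, (1 <= j <= n)%nat -> f j = g j) -> Rprod1 n f = Rprod1 n g.
Proof.
  induction n as [|n IH]; simpl; intros Hfg; auto.
  rewrite IH by (intros; apply Hfg; lia). rewrite Hfg by lia. reflexivity.
Qed.

Lemma Rsum1_ext (n : nat) (f g : nat -> R) :
  (forall j, (1 <= j <= n)%nat -> f j = g j) -> Rsum1 n f = Rsum1 n g.
Proof.
  induction n as [|n IH]; simpl; intros Hfg; auto.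
  rewrite IH by (intros; apply Hfg; lia). rewrite Hfg by lia. reflexivity.
Qed.

Lemma Rprod1_neq0 (n : nat) (f : nat -> R) :
  (forall j, (1 <= j <= n)%nat -> f j <> 0) -> Rprod1 n f <> 0.
Proof.
  induction n as [|n IH]; simpl; intros Hf; [lra |].
  apply Rmult_integral_contrapositive; split; [apply IH; intros |]; apply Hf; lia.
Qed.

Definition change_factor (alpha : nat -> R) (j : nat) (x y : R) : R :=
  if Req_EM_T x y then 1 else cos (theta (alpha j)).

(* p_zeta and q_zeta differ only in the value [last] that plays zeta_{n+1}. *)
Definition chfrak (n : nat) (alpha : nat -> R) (z : list bool) (last : R) : R :=
  Rprod1 n (fun j => change_factor alpha j (zval z j)
                       (if Nat.eqb j n then last else zval z (S j))).

Lemma pfrak_chfrak (n : nat) (alpha : nat -> R) (z : list bool) :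
  pfrak n alpha z = chfrak n alpha z (zval z 1).
Proof. reflexivity. Qed.

Lemma qfrak_chfrak (n : nat) (alpha : nat -> R) (z : list bool) :
  qfrak n alpha z = chfrak n alpha z (-1).
Proof. reflexivity. Qed.

Lemma chfrak_snoc (n : nat) (alpha : nat -> R) (z : list bool) (b : bool) (last : R) :
  length z = n ->
  chfrak (S n) alpha (snoc b z) last =
  chfrak n alpha z (bsign b) * change_factor alpha (S n) (bsign b) last.
Proof.
  intros Hl. unfold chfrak at 1. cbn [Rprod1].
  rewrite Nat.eqb_refl, (zval_snoc_last n z b Hl). f_equal.
  apply Rprod1_ext. intros j Hj.
  replace (Nat.eqb j (S n)) with false by (symmetry; apply Nat.eqb_neq; lia).
  rewrite (zval_snoc_lt n z b j Hl Hj).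
  destruct (Nat.eqb_spec j n) as [-> | Hjn].
  - rewrite (zval_snoc_last n z b Hl). reflexivity.
  - rewrite (zval_snoc_lt n z b (S j) Hl) by lia. reflexivity.
Qed.

Lemma pfrak_snoc (n : nat) (alpha : nat -> R) (z : list bool) (b : bool) :
  length z = S n -> zval z 1 = 1 ->
  pfrak (S (S n)) alpha (snoc b z) =
  if b then pfrak (S n) alpha z
  else qfrak (S n) alpha z * cos (theta (alpha (S (S n)))).
Proof.
  intros Hl Hz1. rewrite !pfrak_chfrak, qfrak_chfrak.
  rewrite (zval_snoc_lt (S n) z b 1 Hl) by lia.
  rewrite Hz1, (chfrak_snoc (S n) alpha z b 1 Hl).
  unfold change_factor, bsign. destruct b; destruct Req_EM_T; lra.
Qed.

Lemma qfrak_snoc (n : nat) (alpha : nat -> R) (z : list bool) (b : bool) :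
  length z = S n -> zval z 1 = 1 ->
  qfrak (S (S n)) alpha (snoc b z) =
  if b then pfrak (S n) alpha z * cos (theta (alpha (S (S n))))
  else qfrak (S n) alpha z.
Proof.
  intros Hl Hz1. rewrite !qfrak_chfrak, pfrak_chfrak, Hz1.
  rewrite (chfrak_snoc (S n) alpha z b (-1) Hl).
  unfold change_factor, bsign. destruct b; destruct Req_EM_T; lra.
Qed.

Lemma ldot_snoc (n : nat) (ell : nat -> R) (z : list bool) (b : bool) :
  length z = n -> ldot (S n) ell (snoc b z) = ldot n ell z + ell (S n) * bsign b.
Proof.
  intros Hl. unfold ldot. cbn [Rsum1]. rewrite (zval_snoc_last n z b Hl).
  f_equal. apply Rsum1_ext. intros j Hj. rewrite (zval_snoc_lt n z b j Hl Hj).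
  reflexivity.
Qed.

(** * The recurrence for the sums P_n and Q_n *)

Definition pterm (n : nat) (alpha ell : nat -> R) (s : R) (z : list bool) : C :=
  Cscale (pfrak n alpha z) (Cexpi (ldot n ell z * s)).

Definition qterm (n : nat) (alpha ell : nat -> R) (s : R) (z : list bool) : C :=
  Cscale (qfrak n alpha z) (Cexpi (- (ldot n ell z * s))).

Definition Psum (n : nat) (alpha ell : nat -> R) (s : R) : C :=
  Csum (map (pterm n alpha ell s) (sign_vectors1 n)).

Definition Qsum (n : nat) (alpha ell : nat -> R) (s : R) : C :=
  Csum (map (qterm n alpha ell s) (sign_vectors1 n)).

Definition rstep (t c : R) (P Q : C) : C :=
  Cadd (Cmul (Cexpi t) P) (Cscale c (Cmul (Cexpi (- t)) (Cconj Q))).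

Lemma Psum_one (alpha ell : nat -> R) (s : R) :
  Psum 1 alpha ell s = rstep (ell 1%nat * s) (cos (theta (alpha 1%nat))) C1 C0.
Proof.
  unfold Psum, pterm, pfrak, ldot, rstep, znext_cyc, zval. simpl.
  destruct Req_EM_T; [| lra].
  replace ((0 + ell 1%nat * 1) * s) with (ell 1%nat * s) by ring. C_ring.
Qed.

Lemma Qsum_one (alpha ell : nat -> R) (s : R) :
  Qsum 1 alpha ell s = rstep (ell 1%nat * s) (cos (theta (alpha 1%nat))) C0 C1.
Proof.
  unfold Qsum, qterm, qfrak, ldot, rstep, znext_neg, zval. simpl.
  destruct Req_EM_T; [lra |].
  replace ((0 + ell 1%nat * 1) * s) with (ell 1%nat * s) by ring. C_ring.
Qed.

Section Recurrence.

Variables (n : nat) (alpha ell : nat -> R) (s : R).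

(* The data of the new factor A(alpha_{n+2}) B(ell_{n+2}, s). *)
Let t : R := ell (S (S n)) * s.
Let c : R := cos (theta (alpha (S (S n)))).

Lemma pterm_snoc (z : list bool) (b : bool) :
  length z = S n -> zval z 1 = 1 ->
  pterm (S (S n)) alpha ell s (snoc b z) =
  if b then Cmul (Cexpi t) (pterm (S n) alpha ell s z)
  else Cscale c (Cmul (Cexpi (- t)) (Cconj (qterm (S n) alpha ell s z))).
Proof.
  intros Hl Hz1. unfold pterm, qterm, t, c.
  rewrite pfrak_snoc, ldot_snoc by assumption.
  destruct b; unfold bsign.
  - replace ((ldot (S n) ell z + ell (S (S n)) * 1) * s)
      with (ldot (S n) ell z * s + ell (S (S n)) * s) by ring.
    rewrite Cexpi_add. C_ring.
  - replace ((ldot (S n) ell z + ell (S (S n)) * -1) * s)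
      with (ldot (S n) ell z * s + - (ell (S (S n)) * s)) by ring.
    rewrite Cexpi_add. apply C_ext; simpl; rewrite !cos_neg, !sin_neg; ring.
Qed.

Lemma qterm_snoc (z : list bool) (b : bool) :
  length z = S n -> zval z 1 = 1 ->
  qterm (S (S n)) alpha ell s (snoc b z) =
  if b then Cscale c (Cmul (Cexpi (- t)) (Cconj (pterm (S n) alpha ell s z)))
  else Cmul (Cexpi t) (qterm (S n) alpha ell s z).
Proof.
  intros Hl Hz1. unfold pterm, qterm, t, c.
  rewrite qfrak_snoc, ldot_snoc by assumption.
  destruct b; unfold bsign.
  - replace (- ((ldot (S n) ell z + ell (S (S n)) * 1) * s))
      with (- (ldot (S n) ell z * s) + - (ell (S (S n)) * s)) by ring.
    rewrite Cexpi_add. apply C_ext; simpl; rewrite !cos_neg, !sin_neg; ring.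
  - replace (- ((ldot (S n) ell z + ell (S (S n)) * -1) * s))
      with (- (ldot (S n) ell z * s) + ell (S (S n)) * s) by ring.
    rewrite Cexpi_add. C_ring.
Qed.

(* The sum of the steps is the step of the sums, since both
   u |-> e^{it} u and u |-> c e^{-it} conj u are additive. *)
Lemma Csum_rstep (L : list (list bool)) (f g : list bool -> C) :
  Cadd (Csum (map (fun z => Cmul (Cexpi t) (f z)) L))
       (Csum (map (fun z => Cscale c (Cmul (Cexpi (- t)) (Cconj (g z)))) L)) =
  rstep t c (Csum (map f L)) (Csum (map g L)).
Proof.
  unfold rstep. f_equal.
  - apply (Csum_map_additive (Cmul (Cexpi t))); intros; C_ring.
  - apply (Csum_map_additive (fun u => Cscale c (Cmul (Cexpi (- t)) (Cconj u))));
      intros; C_ring.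
Qed.

Lemma Psum_snoc :
  Psum (S (S n)) alpha ell s = rstep t c (Psum (S n) alpha ell s) (Qsum (S n) alpha ell s).
Proof.
  unfold Psum, Qsum. rewrite Csum_sign_vectors1_snoc, <- Csum_rstep.
  f_equal; f_equal; apply map_ext_in; intros z Hz;
    apply sign_vectors1_In in Hz as [Hl Hz1]; now rewrite pterm_snoc.
Qed.

Lemma Qsum_snoc :
  Qsum (S (S n)) alpha ell s = rstep t c (Qsum (S n) alpha ell s) (Psum (S n) alpha ell s).
Proof.
  unfold Psum, Qsum. rewrite Csum_sign_vectors1_snoc, Cadd_comm, <- Csum_rstep.
  f_equal; f_equal; apply map_ext_in; intros z Hz;
    apply sign_vectors1_In in Hz as [Hl Hz1]; now rewrite qterm_snoc.
Qed.

End Recurrence.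

(** * The transfer matrix *)

Definition Mform (p q : C) : M2 := mkM2 p q (Cconj q) (Cconj p).

Definition Mscaled (d : R) (P Q : C) : M2 :=
  Mform (Cscale (1 / d) P) (Cmul (mkC 0 (-1)) (Cscale (1 / d) Q)).

Lemma Mid_Mscaled : Mid = Mscaled 1 C1 C0.
Proof.
  unfold Mscaled, Mform, Mid. f_equal; apply C_ext; unfold C0, C1, RtoC; simpl; field.
Qed.

Lemma ABmat_Mscaled (a l s d : R) (P Q : C) :
  d <> 0 -> sin (theta a) <> 0 ->
  Mmul (Mmul (Amat a) (Bmat l s)) (Mscaled d P Q) =
  Mscaled (d * sin (theta a)) (rstep (l * s) (cos (theta a)) P Q)
                              (rstep (l * s) (cos (theta a)) Q P).
Proof.
  intros Hd Hsin. destruct P as [P1 P2], Q as [Q1 Q2].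
  unfold Mscaled, Mform, Mmul, Amat, Bmat, rstep.
  f_equal; apply C_ext; unfold C0, RtoC; simpl; rewrite ?cos_neg, ?sin_neg;
    field; auto.
Qed.

Lemma p_n_q_n_Mscaled (n : nat) (alpha ell : nat -> R) (s : R) :
  Mform (p_n n alpha ell s) (q_n n alpha ell s) =
  Mscaled (sin_prod n alpha) (Psum n alpha ell s) (Qsum n alpha ell s).
Proof. reflexivity. Qed.

Lemma Tmat_S (alpha ell : nat -> R) (s : R) (n : nat) :
  Tmat alpha ell s (S n) =
  Mmul (Mmul (Amat (alpha (S n))) (Bmat (ell (S n)) s)) (Tmat alpha ell s n).
Proof. reflexivity. Qed.

Lemma Tmat_form (m : nat) (alpha ell : nat -> R) (s : R) :
  (forall j, (1 <= j <= S m)%nat -> sin (theta (alpha j)) <> 0) ->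
  Tmat alpha ell s (S m) = Mform (p_n (S m) alpha ell s) (q_n (S m) alpha ell s).
Proof.
  rewrite p_n_q_n_Mscaled.
  induction m as [|m IH]; intros Hsin; rewrite Tmat_S.
  - change (Tmat alpha ell s 0) with Mid.
    rewrite Mid_Mscaled, ABmat_Mscaled, Psum_one, Qsum_one.
    + reflexivity.
    + lra.
    + apply Hsin; lia.
  - rewrite IH by (intros; apply Hsin; lia).
    rewrite ABmat_Mscaled, Psum_snoc, Qsum_snoc.
    + reflexivity.
    + apply Rprod1_neq0. intros; apply Hsin; lia.
    + apply Hsin; lia.
Qed.

(** * Determinants *)

Definition Mdet (X : M2) : C :=
  Cadd (Cmul (m11 X) (m22 X)) (Cscale (-1) (Cmul (m12 X) (m21 X))).

Lemma Mdet_mul (X Y : M2) : Mdet (Mmul X Y) = Cmul (Mdet X) (Mdet Y).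
Proof. destruct X as [[] [] [] []], Y as [[] [] [] []]. C_ring. Qed.

Lemma Mdet_Mform (p q : C) : Mdet (Mform p q) = RtoC (Cnorm2 p - Cnorm2 q).
Proof. destruct p, q. unfold Cnorm2. C_ring. Qed.

(* det A(a) = csc^2 - cot^2 = 1. *)
Lemma Mdet_Amat (a : R) : sin (theta a) <> 0 -> Mdet (Amat a) = C1.
Proof.
  intros Hsin. pose proof (sin2_cos2 (theta a)) as Hpyth. unfold Rsqr in Hpyth.
  pose proof (Rinv_r _ Hsin) as Hcsc.
  apply C_ext; unfold Mdet, Amat, C1, RtoC, Rdiv; simpl; nra.
Qed.

Lemma Mdet_Bmat (l s : R) : Mdet (Bmat l s) = C1.
Proof.
  pose proof (sin2_cos2 (l * s)) as Hpyth. unfold Rsqr in Hpyth.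
  apply C_ext; unfold Mdet, Bmat, C1, C0, RtoC; simpl; rewrite ?cos_neg, ?sin_neg; lra.
Qed.

Lemma Tmat_det (alpha ell : nat -> R) (s : R) (n : nat) :
  (forall j, (1 <= j <= n)%nat -> sin (theta (alpha j)) <> 0) ->
  Mdet (Tmat alpha ell s n) = C1.
Proof.
  induction n as [|n IH]; intros Hsin.
  - apply C_ext; unfold Mdet, Mid, C1, C0, RtoC; simpl; ring.
  - rewrite Tmat_S, !Mdet_mul, IH, Mdet_Amat, Mdet_Bmat by (intros; apply Hsin; lia).
    C_ring.
Qed.

(* sin(pi^2 / (2 alpha)) = 0 with 0 < alpha < pi forces alpha = pi / (2k). *)
Lemma sin_theta_neq0 (a : R) : 0 < a < PI -> ~ in_E a -> sin (theta a) <> 0.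
Proof.
  intros [Ha0 HaPI] HnotE Hsin0. apply sin_eq_0_0 in Hsin0 as [k Hk].
  unfold theta in Hk. pose proof PI_RGT_0 as Hpi.
  assert (HPI : PI = 2 * a * IZR k).
  { apply (Rmult_eq_reg_l (PI / (2 * a))).
    - replace (PI / (2 * a) * PI) with (PI ^ 2 / (2 * a)) by (field; lra).
      rewrite Hk. field. lra.
    - apply Rgt_not_eq, Rdiv_lt_0_compat; lra. }
  assert (Hk_pos : (0 < k)%Z) by (apply lt_IZR; simpl; nra).
  apply HnotE. exists (Z.to_nat k). split; [lia |].
  rewrite INR_IZR_INZ, Z2Nat.id by lia.
  rewrite HPI. field. apply not_0_IZR. lia.
Qed.

Theorem theorem6p1 (n : nat) (alpha ell : nat -> R) (sigma : R) :
  (1 <= n)%nat ->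
  (forall j, (1 <= j <= n)%nat -> 0 < alpha j < PI /\ ~ in_E (alpha j)) ->
  (forall j, (1 <= j <= n)%nat -> 0 < ell j) ->
  let T := Tmat alpha ell sigma n in
  let p := p_n n alpha ell sigma in
  let q := q_n n alpha ell sigma in
  T = mkM2 p q (Cconj q) (Cconj p) /\ Cnorm2 p - Cnorm2 q = 1.
Proof.
  intros Hn Halpha _ T p q.
  assert (Hsin : forall j, (1 <= j <= n)%nat -> sin (theta (alpha j)) <> 0).
  { intros j Hj. destruct (Halpha j Hj). apply sin_theta_neq0; assumption. }
  destruct n as [|m]; [lia |].
  assert (HT : T = Mform p q) by (apply Tmat_form; exact Hsin).
  split; [exact HT |].
  pose proof (Tmat_det alpha ell sigma (S m) Hsin) as Hdet.
  fold T in Hdet. rewrite HT, Mdet_Mform in Hdet.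
  apply (f_equal re) in Hdet. exact Hdet.
Qed.
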